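(* Suppose $S$ is totally ordered and $V\subset\mathcal H$ is dense in $\mathcal H$. If for every $\phi\in V\setminus\{0\}$ there is a probability measure $\mathbb P_\phi$ on $(\Omega,\Sigma)$ such that $$\mathbb P_\phi(X_{t_i}=a_i,\ i=1,\dots,k)=\|p^{t_k}_{a_k}\cdots p^{t_1}_{a_1}\hat\phi\|^2$$ for every $t_1<\dots<t_k$ in $S$ and every $a_i\in\Gamma(t_i)$, then $\mathcal H_\pi=\mathcal H$, i.e., $p^s_a$ and $p^t_b$ commute for all $s,t\in S$, $a\in\Gamma(s)$, $b\in\Gamma(t)$.
   Context: Let $\mathcal H$ be a complex Hilbert space. A projection is a bounded self-adjoint idempotent operator. For $\phi\neq0$, $\hat\phi=\phi/\|\phi\|$. Sums of countably many operators are understood strongly. Let $S$ be a set; for each $t\in S$ let $\Gamma(t)$ be a countable set and for $a\in\Gamma(t)$ let $p^t_a$ be a projection on $\mathcal H$ with $\sum_{a\in\Gamma(t)}p^t_a=I$. Let $\pi=\{p^t_a\}$. $\pi$ commutes on $\phi$ if $W\phi=V\phi$ whenever $W,V$ are finite products of elements of $\pi$ with the same factors (with multiplicity) in possibly different orders; $\mathcal H_\pi$ is the set of such $\phi$. Let $\Omega=\prod_{t\in S}\Gamma(t)$, $X_t(\omega)=\omega_t$, and $\Sigma$ the σ-algebra generated by the sets $\{X_t=a\}$; $\{X_{t_i}=a_i,\ i=1,\dots,k\}=\{\omega:\omega_{t_i}=a_i,\ i=1,\dots,k\}$. *)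

From HB Require Import structures.
From mathcomp Require Import all_boot all_order all_algebra.
From mathcomp Require Import all_classical all_reals all_analysis.
From mathcomp Require Import complex.

Set Implicit Arguments.
Unset Strict Implicit.
Unset Printing Implicit Defensive.

Import Order.TTheory GRing.Theory Num.Theory.
Local Open Scope classical_set_scope.
Local Open Scope ring_scope.
Local Open Scope complex_scope.

Definition hnorm (R : realType) (H : lmodType R[i]) (ip : H -> H -> R[i])
  (x : H) : R := Num.sqrt (complex.Re (ip x x)).

Definition is_complex_hilbert (R : realType) (H : lmodType R[i])
  (ip : H -> H -> R[i]) : Prop :=
  [/\ (forall (a : R[i]) (x y z : H), ip (a *: x + y) z = a * ip x z + ip y z),
      (forall x y : H, ip y x = conjc (ip x y)),
      (forall x : H, 0 <= complex.Re (ip x x)),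
      (forall x : H, ip x x = 0 -> x = 0) &
      (forall u : nat -> H,
         (forall e : R, 0 < e -> exists N : nat, forall m n : nat,
            (N <= m)%N -> (N <= n)%N -> hnorm ip (u m - u n) < e) ->
         exists l : H, forall e : R, 0 < e -> exists N : nat, forall n : nat,
            (N <= n)%N -> hnorm ip (u n - l) < e)].

Definition bounded_operator (R : realType) (H : lmodType R[i])
  (ip : H -> H -> R[i]) (f : H -> H) : Prop :=
  (forall (a : R[i]) (x y : H), f (a *: x + y) = a *: f x + f y) /\
  exists M : R, forall x : H, hnorm ip (f x) <= M * hnorm ip x.

Definition is_projection (R : realType) (H : lmodType R[i])
  (ip : H -> H -> R[i]) (f : H -> H) : Prop :=
  [/\ bounded_operator ip f,
      (forall x y : H, ip (f x) y = ip x (f y)) &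
      (forall x : H, f (f x) = f x)].

(** Strong (unconditional) convergence of the countable family
   [(q a x)_(a : I)] to [y]: the finite partial sums over finite index sets
   eventually containing any given finite set converge to [y]. *)
Definition strong_sum_to (R : realType) (H : lmodType R[i])
  (ip : H -> H -> R[i]) (I : countType) (q : I -> H -> H) (x y : H) : Prop :=
  forall e : R, 0 < e -> exists s0 : seq I, forall s : seq I,
    uniq s -> {subset s0 <= s} -> hnorm ip (\sum_(a <- s) q a x - y) < e.

Definition resolution_family (R : realType) (H : lmodType R[i])
  (ip : H -> H -> R[i]) (S : Type) (Gam : S -> countType)
  (p : forall t : S, Gam t -> H -> H) : Prop :=
  (forall (t : S) (a : Gam t), is_projection ip (p t a)) /\
  (forall (t : S) (x : H), strong_sum_to ip (p t) x x).

(** Applying a word of projections: [apply_word p [:: (t1,a1); ...; (tk,ak)] x]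
   is [p^{tk}_{ak} ( ... (p^{t1}_{a1} x))]. *)
Definition apply_word (H : Type) (S : Type) (Gam : S -> Type)
  (p : forall t : S, Gam t -> H -> H) (w : seq {t : S & Gam t}) (x : H) : H :=
  foldl (fun v (z : {t : S & Gam t}) => p (tag z) (tagged z) v) x w.

Definition commutes_on (H : Type) (S : eqType) (Gam : S -> countType)
  (p : forall t : S, Gam t -> H -> H) (x : H) : Prop :=
  forall w v : seq {t : S & Gam t}, perm_eq w v ->
    apply_word p w x = apply_word p v x.

Definition H_pi (H : Type) (S : eqType) (Gam : S -> countType)
  (p : forall t : S, Gam t -> H -> H) : set H := [set x | commutes_on p x].

Definition dense_in (R : realType) (H : lmodType R[i])
  (ip : H -> H -> R[i]) (V : set H) : Prop :=
  forall (x : H) (e : R), 0 < e -> exists v : H, V v /\ hnorm ip (x - v) < e.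

Definition cyl (S : eqType) (Gam : S -> eqType) (w : seq {t : S & Gam t})
  : set (forall t : S, Gam t) :=
  [set om | forall z, z \in w -> existT Gam (tag z) (om (tag z)) = z].

Definition Sigma_cyl (S : eqType) (Gam : S -> eqType)
  : set (set (forall t : S, Gam t)) :=
  <<s [set cyl [:: z] | z in [set: {t : S & Gam t}]] >>.

Definition is_probability_on (R : realType) (Om : Type) (Sig : set (set Om))
  (P : set Om -> \bar R) : Prop :=
  [/\ P set0 = 0%E,
      (forall A, Sig A -> (0 <= P A)%E),
      (forall F : nat -> set Om, (forall n, Sig (F n)) -> trivIset setT F ->
         (\sum_(0 <= i <oo) P (F i))%E = P (\bigcup_n F n)) &
      P setT = 1%E].

Definition hat (R : realType) (H : lmodType R[i]) (ip : H -> H -> R[i])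
  (x : H) : H := ((hnorm ip x)^-1)%:C *: x.

From HB Require Import structures.
From mathcomp Require Import all_boot all_order all_algebra.
From mathcomp Require Import all_classical all_reals all_analysis.
From mathcomp Require Import complex.
From mathcomp Require Import ring lra.

Set Implicit Arguments.
Unset Strict Implicit.
Unset Printing Implicit Defensive.

Import Order.TTheory GRing.Theory Num.Theory.
Local Open Scope classical_set_scope.
Local Open Scope ring_scope.
Local Open Scope complex_scope.

(* Two consequences of the probability
   axioms then become norm inequalities on V: for s < t,
   P(X_s = a, X_t = b) <= P(X_t = b) gives |p^t_b p^s_a v| <= |p^t_b v|, and for
   a <> b, P(X_s = a) + P(X_s = b) <= 1 gives |p_a v|^2 + |p_b v|^2 <= |v|^2.
   Both extend from the dense set V to all of H on kernels: the first yields
   p^t_b p^s_a (1 - p^t_b) = 0, i.e. p^t_b p^s_a = p^t_b p^s_a p^t_b, and taking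
   adjoints p^s_a p^t_b = p^t_b p^s_a; the second yields p_b p_a = 0. *)

Section Probability.
Variables (R : realType) (Om : Type) (Sig : set (set Om)) (P : set Om -> \bar R).
Hypotheses (Sig_sigma : sigma_algebra setT Sig) (P_prob : is_probability_on Sig P).

Lemma sigma_setT : Sig setT.
Proof. by case: Sig_sigma => S0 SC _; rewrite -(setD0 setT); exact: SC. Qed.

Lemma sigma_setU A B : Sig A -> Sig B -> Sig (A `|` B).
Proof.
case: Sig_sigma => S0 _ SU SA SB; rewrite -bigcup2E.
by apply: SU => -[|[|n]].
Qed.

Lemma sigma_setD A B : Sig A -> Sig B -> Sig (A `\` B).
Proof.
case: Sig_sigma => _ SC _ SA SB.
have -> : A `\` B = setT `\` ((setT `\` A) `|` B).
  by rewrite !setTD setCU setCK.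
by apply/SC/sigma_setU => //; exact: SC.
Qed.

Lemma sigma_setI A B : Sig A -> Sig B -> Sig (A `&` B).
Proof. by move=> SA SB; rewrite -setDD; apply: sigma_setD => //; exact: sigma_setD. Qed.

Lemma probability_setU A B : Sig A -> Sig B -> A `&` B = set0 ->
  P (A `|` B) = (P A + P B)%E.
Proof.
case: P_prob => _ P_ge0 P_additive _ SA SB AB0.
have S2 n : Sig (bigcup2 A B n) by case: n => [|[|n]] //=; case: Sig_sigma.
rewrite -bigcup2E -(P_additive _ S2); last by rewrite -trivIset_bigcup2.
rewrite (nneseries_split 0 2); last by move=> k _; exact: P_ge0.
rewrite eseries0 ?adde0; last by case: P_prob => P0 _ _ _ [|[|i]].
by rewrite add0n big_nat_recr //= big_nat_recr //= big_nil add0e.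
Qed.

Lemma probability_le A B : Sig A -> Sig B -> A `<=` B -> (P A <= P B)%E.
Proof.
move=> SA SB AB; have SBA := sigma_setD SB SA.
rewrite -(setDUK AB) probability_setU ?setDIK //.
by rewrite leeDl //; case: P_prob => _ P_ge0 _ _; exact: P_ge0.
Qed.

Lemma probability_le1 A : Sig A -> (P A <= 1)%E.
Proof.
by move=> SA; case: (P_prob) => _ _ _ <-; apply: probability_le => //; exact: sigma_setT.
Qed.

End Probability.

Section Cylinders.
Variables (R : realType) (S : eqType) (Gam : S -> eqType).
Variable P : set (forall t : S, Gam t) -> \bar R.
Hypothesis P_prob : is_probability_on (@Sigma_cyl S Gam) P.

Let Sigma_cyl_sigma : sigma_algebra setT (@Sigma_cyl S Gam).
Proof. exact: smallest_sigma_algebra. Qed.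

Lemma Sigma_cyl1 (z : {t : S & Gam t}) : @Sigma_cyl S Gam (cyl [:: z]).
Proof. by apply: sub_sigma_algebra; exists z. Qed.

Lemma cyl_cons (z : {t : S & Gam t}) w : cyl (z :: w) = cyl [:: z] `&` cyl w.
Proof.
apply/seteqP; split=> om.
  by move=> cw; split=> z'; rewrite ?inE => z'w; apply: cw; rewrite inE z'w ?orbT.
by case=> cz cw z'; rewrite inE => /orP[z'z|z'w]; [apply: cz; rewrite inE|exact: cw].
Qed.

Lemma cyl1_disjoint s (a b : Gam s) : a != b ->
  cyl [:: Tagged Gam a] `&` cyl [:: Tagged Gam b] = set0.
Proof.
move=> ab; apply/seteqP; split=> om // [ca cb].
move: (ca _ (mem_head _ _)) (cb _ (mem_head _ _)) => /= -> /eqP.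
by rewrite eq_Tagged /= (negPf ab).
Qed.

Lemma probability_cyl2_le (z1 z2 : {t : S & Gam t}) :
  (P (cyl [:: z1; z2]) <= P (cyl [:: z2]))%E.
Proof.
rewrite cyl_cons; apply: (probability_le Sigma_cyl_sigma) => //.
- by apply: (sigma_setI Sigma_cyl_sigma); exact: Sigma_cyl1.
- exact: Sigma_cyl1.
Qed.

Lemma probability_cyl1_disjoint s (a b : Gam s) : a != b ->
  (P (cyl [:: Tagged Gam a]) + P (cyl [:: Tagged Gam b]) <= 1)%E.
Proof.
move=> ab; have [Sa Sb] := (Sigma_cyl1 (Tagged Gam a), Sigma_cyl1 (Tagged Gam b)).
rewrite -(probability_setU Sigma_cyl_sigma) ?cyl1_disjoint //.
by apply: (probability_le1 Sigma_cyl_sigma) => //; exact: (sigma_setU Sigma_cyl_sigma).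
Qed.

End Cylinders.

Section LinearMaps.
Variables (K : pzRingType) (H : lmodType K) (f : H -> H).
Hypothesis f_lin : linear f.

Lemma linD x y : f (x + y) = f x + f y.
Proof. by rewrite -[x]scale1r f_lin !scale1r. Qed.

Lemma lin0 : f 0 = 0.
Proof. by apply: (@addrI _ (f 0)); rewrite -linD !addr0. Qed.

Lemma linZ a x : f (a *: x) = a *: f x.
Proof. by rewrite -[a *: x]addr0 f_lin lin0 addr0. Qed.

Lemma linB x y : f (x - y) = f x - f y.
Proof. by rewrite addrC -scaleN1r f_lin scaleN1r addrC. Qed.

End LinearMaps.

Definition is_inner_product (R : realType) (H : lmodType R[i])
    (ip : H -> H -> R[i]) : Prop :=
  [/\ (forall (a : R[i]) (x y z : H), ip (a *: x + y) z = a * ip x z + ip y z),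
      (forall x y : H, ip y x = conjc (ip x y)),
      (forall x : H, 0 <= complex.Re (ip x x)) &
      (forall x : H, ip x x = 0 -> x = 0)].

Lemma hilbert_inner_product (R : realType) (H : lmodType R[i])
    (ip : H -> H -> R[i]) :
  is_complex_hilbert ip -> is_inner_product ip.
Proof. by case. Qed.

Section InnerProduct.
Variables (R : realType) (H : lmodType R[i]) (ip : H -> H -> R[i]).
Hypothesis ip_inner : is_inner_product ip.

Definition sqnorm (x : H) : R := complex.Re (ip x x).

Definition sqnorm_bounded (f : H -> H) : Prop :=
  exists2 C, 0 <= C & forall x, sqnorm (f x) <= C * sqnorm x.

Lemma ipDl x y z : ip (x + y) z = ip x z + ip y z.
Proof. by case: ip_inner => ipl _ _ _; rewrite -[x]scale1r ipl mul1r scale1r. Qed.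

Lemma ip0l z : ip 0 z = 0.
Proof. by apply: (@addrI _ (ip 0 z)); rewrite -ipDl !addr0. Qed.

Lemma ipZl a x z : ip (a *: x) z = a * ip x z.
Proof. by case: ip_inner => ipl _ _ _; rewrite -[a *: x]addr0 ipl ip0l addr0. Qed.

Lemma ipNl x z : ip (- x) z = - ip x z.
Proof. by rewrite -scaleN1r ipZl mulN1r. Qed.

Lemma ipC x y : ip y x = conjc (ip x y).
Proof. by case: ip_inner. Qed.

Lemma ipDr x y z : ip z (x + y) = ip z x + ip z y.
Proof. by rewrite ipC ipDl rmorphD /= -!ipC. Qed.

Lemma ip0r z : ip z 0 = 0.
Proof. by rewrite ipC ip0l rmorph0. Qed.

Lemma ipZr a x z : ip z (a *: x) = conjc a * ip z x.
Proof. by rewrite ipC ipZl rmorphM /= -!ipC. Qed.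

Lemma ipNr x z : ip z (- x) = - ip z x.
Proof. by rewrite ipC ipNl rmorphN /= -!ipC. Qed.

Lemma ip_injl x y : (forall z, ip x z = ip y z) -> x = y.
Proof.
case: ip_inner => _ _ _ ip_def xy; apply/eqP; rewrite -subr_eq0; apply/eqP.
by apply: ip_def; rewrite ipDl ipNl xy subrr.
Qed.

Lemma ip_sqnorm x : ip x x = (sqnorm x)%:C.
Proof.
have := ipC x x; rewrite /sqnorm; case: (ip x x) => a b /= [] b_opp.
suff -> : b = 0 by [].
have : b *+ 2 == 0 by rewrite mulr2n {1}b_opp addNr.
by rewrite mulrn_eq0 => /eqP.
Qed.

Lemma sqnorm_ge0 x : 0 <= sqnorm x.
Proof. by case: ip_inner => _ _ + _; apply. Qed.

Lemma sqnorm_eq0 x : sqnorm x = 0 -> x = 0.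
Proof. by case: ip_inner => _ _ _ ip_def x0; apply: ip_def; rewrite ip_sqnorm x0. Qed.

Lemma sqnorm_gt0 x : x != 0 -> 0 < sqnorm x.
Proof.
by move=> x0; rewrite lt_def sqnorm_ge0 andbT; apply: contra_neq x0; exact: sqnorm_eq0.
Qed.

Lemma sqnorm0 : sqnorm 0 = 0.
Proof. by rewrite /sqnorm ip0l. Qed.

Lemma hnorm_sqr x : hnorm ip x ^+ 2 = sqnorm x.
Proof. by rewrite sqr_sqrtr // sqnorm_ge0. Qed.

Lemma hnorm_ge0 x : 0 <= hnorm ip x.
Proof. exact: sqrtr_ge0. Qed.

Lemma sqnormN x : sqnorm (- x) = sqnorm x.
Proof. by rewrite /sqnorm ipNl ipNr opprK. Qed.

Lemma sqnormZ (c : R) x : sqnorm (c%:C *: x) = c ^+ 2 * sqnorm x.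
Proof.
by rewrite /sqnorm ipZl ipZr conjc_real ip_sqnorm /= !mulr0 !mul0r !subr0 mulrA.
Qed.

Lemma sqnormD_le x y : sqnorm (x + y) <= 2 * sqnorm x + 2 * sqnorm y.
Proof.
have parallelogram : ip (x + y) (x + y) + ip (x - y) (x - y) =
    2 * ip x x + 2 * ip y y.
  by rewrite !ipDl !ipDr !ipNl !ipNr; ring.
have : sqnorm (x + y) + sqnorm (x - y) = 2 * sqnorm x + 2 * sqnorm y.
  by move: parallelogram; rewrite !ip_sqnorm => /(congr1 (@complex.Re R)) /= ->; lra.
by move=> <-; rewrite lerDl sqnorm_ge0.
Qed.

Lemma bounded_sqnorm f : bounded_operator ip f -> sqnorm_bounded f.
Proof.
case=> _ [M fM]; exists (M ^+ 2) => [|x]; first exact: sqr_ge0.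
rewrite -!hnorm_sqr; have := fM x; have := hnorm_ge0 x; have := hnorm_ge0 (f x).
nra.
Qed.

Lemma dense_sqnorm V x e : dense_in ip V -> 0 < e ->
  exists2 v, V v & sqnorm (x - v) < e.
Proof.
move=> V_dense e0; have [|v [Vv]] := V_dense x (Num.sqrt e); first by rewrite sqrtr_gt0.
by rewrite /hnorm ltr_sqrt //; exists v.
Qed.

Section DenseComparison.
Variables (V : set H) (f g : H -> H).
Hypotheses (V_dense : dense_in ip V) (f_lin : linear f) (g_lin : linear g).
Hypotheses (f_bd : sqnorm_bounded f) (g_bd : sqnorm_bounded g).
Hypothesis fg_V : forall v, V v -> sqnorm (f v) <= sqnorm (g v).

(* The constant 4 comes from using the parallelogram bound twice; only the
   resulting inclusion of kernels matters. *)
Lemma dense_sqnorm_le x : sqnorm (f x) <= 4 * sqnorm (g x).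
Proof.
have [Cf Cf0 fCf] := f_bd; have [Cg Cg0 gCg] := g_bd.
apply/ler_addgt0Pr => e e0; set K := 4 * Cg + 2 * Cf.
have K1 : 0 < K + 1 by rewrite /K; lra.
have [v Vv] := dense_sqnorm x V_dense (divr_gt0 e0 K1).
have := mulfVK (lt0r_neq0 K1) e; move: (e / (K + 1)) => d de xv.
set y := x - v in xv.
have fx : f x = f v + f y by rewrite -linD // addrC subrK.
have gv : g v = g x + - g y by rewrite -linB // /y opprB addrC subrK.
have := sqnormD_le (f v) (f y); have := sqnormD_le (g x) (- g y).
rewrite -fx -gv sqnormN; have := fg_V Vv; have := fCf y; have := gCg y.
have := sqnorm_ge0 y; rewrite /K in de *; nra.
Qed.

Lemma dense_ker_sub x : g x = 0 -> f x = 0.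
Proof.
move=> gx0; apply: sqnorm_eq0; apply/eqP; rewrite eq_le sqnorm_ge0 andbT.
by have := dense_sqnorm_le x; rewrite gx0 sqnorm0 mulr0.
Qed.

End DenseComparison.

Section Projections.
Variables (V : set H) (P1 P2 : H -> H).
Hypothesis V_dense : dense_in ip V.
Hypotheses (P1_proj : is_projection ip P1) (P2_proj : is_projection ip P2).

Let P1_lin : linear P1. Proof. by case: P1_proj => -[]. Qed.
Let P2_lin : linear P2. Proof. by case: P2_proj => -[]. Qed.
Let P1_bd : sqnorm_bounded P1. Proof. by case: P1_proj => /bounded_sqnorm. Qed.
Let P2_bd : sqnorm_bounded P2. Proof. by case: P2_proj => /bounded_sqnorm. Qed.

Lemma sqnorm_projectionD x : sqnorm x = sqnorm (P1 x) + sqnorm (x - P1 x).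
Proof.
case: P1_proj => _ P1_sa P1_idem.
have P1x_orth : ip (P1 x) (x - P1 x) = 0 by rewrite P1_sa linB // P1_idem subrr ip0r.
have x_orth : ip (x - P1 x) (P1 x) = 0 by rewrite ipC P1x_orth rmorph0.
have : ip x x = ip (P1 x) (P1 x) + ip (x - P1 x) (x - P1 x).
  rewrite -[in ip x x](subrK (P1 x) x) addrC.
  move: (x - P1 x) P1x_orth x_orth => y P1x_y y_P1x.
  by rewrite ipDl !ipDr P1x_y y_P1x addr0 add0r.
by rewrite !ip_sqnorm => /(congr1 (@complex.Re R)).
Qed.

(* [P2 P1 (1 - P2) = 0] by density, i.e. [P2 P1 = P2 P1 P2], and the right side
   is self-adjoint. *)
Lemma projections_commute :
  (forall v, V v -> sqnorm (P2 (P1 v)) <= sqnorm (P2 v)) ->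
  forall x, P1 (P2 x) = P2 (P1 x).
Proof.
move=> P21_V; case: (P1_proj) (P2_proj) => _ P1_sa _ [_ P2_sa P2_idem].
have P212 y : P2 (P1 y) = P2 (P1 (P2 y)).
  apply/eqP; rewrite -subr_eq0 -!linB //; apply/eqP.
  apply: (dense_ker_sub (f := fun u => P2 (P1 u)) (g := P2) V_dense) => //;
    last by rewrite linB // P2_idem subrr.
  - by move=> a u w; rewrite P1_lin P2_lin.
  - have [C1 C10 P1C1] := P1_bd; have [C2 C20 P2C2] := P2_bd.
    exists (C2 * C1) => [|u]; first exact: mulr_ge0.
    by rewrite -mulrA (le_trans (P2C2 _)) // ler_wpM2l.
move=> x; apply: ip_injl => z.
by rewrite P1_sa P2_sa P212 -P2_sa -P1_sa -P2_sa -P212.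
Qed.

Lemma projections_orthogonal :
  (forall v, V v -> sqnorm (P1 v) + sqnorm (P2 v) <= sqnorm v) ->
  forall x, P2 (P1 x) = 0.
Proof.
move=> P12_V x; case: (P1_proj) => _ _ P1_idem.
apply: (dense_ker_sub (g := fun y => y - P1 y) V_dense) => //.
- by move=> a u w; rewrite P1_lin scalerBr opprD addrACA.
- by exists 1 => // u; rewrite mul1r [leRHS]sqnorm_projectionD lerDr sqnorm_ge0.
- by move=> v /P12_V; rewrite [leRHS]sqnorm_projectionD lerD2l.
- by rewrite P1_idem subrr.
Qed.

End Projections.

End InnerProduct.

Section Words.
Variables (H : Type) (S : eqType) (Gam : S -> eqType).
Variable p : forall t : S, Gam t -> H -> H.
Arguments p : clear implicits.
Hypothesis p_comm : forall (z1 z2 : {t : S & Gam t}) x,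
  p (tag z1) (tagged z1) (p (tag z2) (tagged z2) x) =
  p (tag z2) (tagged z2) (p (tag z1) (tagged z1) x).

Lemma apply_word_cat w1 w2 x :
  apply_word p (w1 ++ w2) x = apply_word p w2 (apply_word p w1 x).
Proof. exact: foldl_cat. Qed.

Lemma apply_word_commute (z : {t : S & Gam t}) w x :
  apply_word p w (p (tag z) (tagged z) x) = p (tag z) (tagged z) (apply_word p w x).
Proof. by elim: w x => [//|z' w IHw] x; rewrite /= -IHw p_comm. Qed.

Lemma apply_word_perm w v :
  perm_eq w v -> forall x, apply_word p w x = apply_word p v x.
Proof.
elim: w v => [|z w IHw] v; first by move/perm_size/esym/size0nil->.
move=> wv x; have zv : z \in v by rewrite -(perm_mem wv) mem_head.
case/splitPr: zv wv => v1 v2 wv.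
have w_v12 : perm_eq w (v1 ++ v2).
  by rewrite -(perm_cons z) (perm_trans wv) // perm_sym -cat1s perm_catCA.
rewrite apply_word_cat /= apply_word_commute (IHw _ w_v12) apply_word_cat.
by rewrite apply_word_commute.
Qed.

End Words.

Lemma apply_wordZ (K : pzRingType) (H : lmodType K) (S : Type) (Gam : S -> Type)
    (p : forall t : S, Gam t -> H -> H) w c x :
  (forall t a, linear (p t a)) -> apply_word p w (c *: x) = c *: apply_word p w x.
Proof. by move=> p_lin; elim: w x => [//|z w IHw] x; rewrite /= -IHw linZ. Qed.

Section BornRule.
Variables (R : realType) (H : lmodType R[i]) (ip : H -> H -> R[i]).
Hypothesis ip_inner : is_inner_product ip.
Variables (dS : Order.disp_t) (S : orderType dS) (Gam : S -> countType).
Variables (p : forall t : S, Gam t -> H -> H) (V : set H).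
Arguments p : clear implicits.
Hypothesis p_lin : forall t a, linear (p t a).
Hypothesis V_born : forall phi : H, V phi -> phi != 0 ->
  exists P : set (forall t : S, Gam t) -> \bar R,
    is_probability_on (@Sigma_cyl S Gam) P /\
    (forall w : seq {t : S & Gam t},
       w != [::] ->
       sorted (fun z1 z2 : {t : S & Gam t} => (tag z1 < tag z2)%O) w ->
       P (cyl w) = ((hnorm ip (apply_word p w (hat ip phi))) ^+ 2)%:E).

Lemma hnorm_hat_word w v :
  hnorm ip (apply_word p w (hat ip v)) ^+ 2 =
  sqnorm ip (apply_word p w v) / sqnorm ip v.
Proof.
by rewrite hnorm_sqr // /hat apply_wordZ // sqnormZ // exprVn hnorm_sqr // mulrC.
Qed.

Lemma sequential_sqnorm_le s t (a : Gam s) (b : Gam t) : (s < t)%O ->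
  forall v, V v -> sqnorm ip (p t b (p s a v)) <= sqnorm ip (p t b v).
Proof.
move=> st v Vv; have [->|v0] := eqVneq v 0; first by rewrite !lin0.
have [P [P_prob P_born]] := V_born Vv v0.
have ab_sorted : sorted (fun z1 z2 : {t : S & Gam t} => (tag z1 < tag z2)%O)
    [:: Tagged Gam a; Tagged Gam b] by rewrite /= st.
have := probability_cyl2_le P_prob (Tagged Gam a) (Tagged Gam b).
rewrite !P_born // lee_fin !hnorm_hat_word.
by rewrite ler_pM2r // invr_gt0 sqnorm_gt0.
Qed.

Lemma exclusive_sqnorm_le s (a b : Gam s) : a != b ->
  forall v, V v -> sqnorm ip (p s a v) + sqnorm ip (p s b v) <= sqnorm ip v.
Proof.
move=> ab v Vv; have [->|v0] := eqVneq v 0; first by rewrite !lin0 // sqnorm0 // addr0.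
have [P [P_prob P_born]] := V_born Vv v0.
have := probability_cyl1_disjoint P_prob ab.
rewrite !P_born // -EFinD lee_fin !hnorm_hat_word -mulrDl.
by rewrite ler_pdivrMr ?sqnorm_gt0 // mul1r.
Qed.

End BornRule.

Theorem theorem7 (R : realType) (H : lmodType R[i]) (ip : H -> H -> R[i])
  (dS : Order.disp_t) (S : orderType dS) (Gam : S -> countType)
  (p : forall t : S, Gam t -> H -> H) (V : set H) :
  is_complex_hilbert ip ->
  resolution_family ip p ->
  dense_in ip V ->
  (forall phi : H, V phi -> phi != 0 ->
     exists P : set (forall t : S, Gam t) -> \bar R,
       is_probability_on (@Sigma_cyl S Gam) P /\
       (forall w : seq {t : S & Gam t},
          w != [::] ->
          sorted (fun z1 z2 : {t : S & Gam t} => (tag z1 < tag z2)%O) w ->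
          P (cyl w) = ((hnorm ip (apply_word p w (hat ip phi))) ^+ 2)%:E)) ->
  H_pi p = [set: H] /\
  (forall (s t : S) (a : Gam s) (b : Gam t) (x : H),
     p s a (p t b x) = p t b (p s a x)).
Proof.
move=> /hilbert_inner_product ip_inner [p_proj _] V_dense V_born.
have p_lin s a : linear (p s a) by case: (p_proj s a) => -[].
have sequential := sequential_sqnorm_le ip_inner p_lin V_born.
have exclusive := exclusive_sqnorm_le ip_inner p_lin V_born.
have p_comm s t (a : Gam s) (b : Gam t) x : p s a (p t b x) = p t b (p s a x).
  case: (ltgtP s t) => [st|ts|st].
  - exact: (projections_commute ip_inner V_dense (p_proj s a) (p_proj t b)
      (sequential s t a b st)).
  - exact/esym/(projections_commute ip_inner V_dense (p_proj t b) (p_proj s a)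
      (sequential t s b a ts)).
  - subst t; have [->//|ab] := eqVneq a b.
    rewrite !(projections_orthogonal ip_inner V_dense (p_proj _ _) (p_proj _ _)) //.
    + exact: exclusive s a b ab.
    + by apply: exclusive; rewrite eq_sym.
split=> //; apply/seteqP; split=> // x _ w v.
by move/(apply_word_perm (fun z1 z2 => p_comm _ _ (tagged z1) (tagged z2))).
Qed.
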